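(* For every integer $n\ge 0$, the path $P_{n+2}$ on $n+2$ vertices belongs to ${\bf Forb}(\Gamma_{\le n})$; that is, $\gamma(P_{n+2})=n+1$ and $\gamma(P_{n+2}\setminus v)<\gamma(P_{n+2})$ for every vertex $v$.
   Context: For a finite graph $G$ and indeterminates $X_G=\{x_u : u\in V(G)\}$, the generalized Laplacian matrix $L(G,X_G)$ is the $V(G)\times V(G)$ matrix over $\mathbb{Z}[X_G]$ with $(u,u)$-entry $x_u$ and $(u,v)$-entry $-m_{uv}$ for $u\ne v$, $m_{uv}$ being the number of edges between $u$ and $v$. The $i$-th critical ideal $I_i(G,X_G)$ is the ideal of $\mathbb{Z}[X_G]$ generated by all $i\times i$ minors of $L(G,X_G)$ (with $I_i=\langle1\rangle$ for $i<1$, $I_i=\langle 0\rangle$ for $i>|V(G)|$). The algebraic co-rank $\gamma(G)$ is the number of critical ideals of $G$ equal to $\langle 1\rangle$. $\Gamma_{\le k}$ is the set of simple connected graphs with $\gamma\le k$; ${\bf Forb}(\Gamma_{\le k})$ is the set of minimal (under induced subgraphs) simple connected graphs $G$ with $\gamma(G)\ge k+1$, equivalently the simple connected graphs $G$ with $\gamma(G)=k+1$ and $\gamma(G\setminus v)<\gamma(G)$ for all vertices $v$. *)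

From HB Require Import structures.
From mathcomp Require Import all_boot all_algebra.
From mathcomp Require Import mpoly.
From Stdlib Require Import ClassicalDescription.

Set Implicit Arguments.
Unset Strict Implicit.
Unset Printing Implicit Defensive.

Import GRing.Theory.
Local Open Scope ring_scope.

(* A finite graph on vertex set 'I_n is given by an adjacency relation
   (we only deal with simple graphs: m_uv = 1 if adj u v, 0 otherwise). *)

Definition simple_graph n (adj : rel 'I_n) : Prop :=
  ssrbool.irreflexive adj /\ ssrbool.symmetric adj.

Definition connected_graph n (adj : rel 'I_n) : Prop :=
  forall u v : 'I_n, connect adj u v.

Definition gen_laplacian n (adj : rel 'I_n) : 'M[{mpoly int[n]}]_n :=
  \matrix_(u, v) if u == v then 'X_u else - ((adj u v : nat)%:R).

(* I_i(G, X_G) = <1>: 1 lies in the ideal generated by all i x i minors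
   (minors indexed by injective row/column selections). *)
Definition crit_ideal_trivial n (adj : rel 'I_n) (i : nat) : Prop :=
  exists c : {ffun 'I_i -> 'I_n} -> {ffun 'I_i -> 'I_n} -> {mpoly int[n]},
    \sum_(f : {ffun 'I_i -> 'I_n} | injectiveb f)
      \sum_(g : {ffun 'I_i -> 'I_n} | injectiveb g)
        c f g * \det (mxsub f g (gen_laplacian adj)) = 1.

Definition crit_ideal_trivialb n (adj : rel 'I_n) (i : nat) : bool :=
  if excluded_middle_informative (crit_ideal_trivial adj i) then true else false.

(* algebraic co-rank: number of critical ideals I_1, ..., I_n equal to <1>. *)
Definition gamma n (adj : rel 'I_n) : nat :=
  #|[set i : 'I_n | crit_ideal_trivialb adj i.+1]|.

Definition del_vertex n (adj : rel 'I_n.+1) (v : 'I_n.+1) : rel 'I_n :=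
  fun i j => adj (lift v i) (lift v j).

Definition in_Forb k n (adj : rel 'I_n.+1) : Prop :=
  [/\ simple_graph adj, connected_graph adj,
      gamma adj = k.+1
    & forall v : 'I_n.+1, (gamma (del_vertex adj v) < gamma adj)%N].

Definition path_adj m : rel 'I_m :=
  fun i j => (i.+1 == j :> nat) || (j.+1 == i :> nat).

From HB Require Import structures.
From mathcomp Require Import all_boot all_algebra.
From mathcomp Require Import mpoly.
From mathcomp Require Import zify.
From Stdlib Require Import ClassicalDescription.

(* Evaluating each x_u at the degree of u turns L(G, X_G) into the ordinary
   Laplacian, whose rows sum to zero; so every full-size minor vanishes at that
   point and I_n(G) is never trivial: gamma(G) <= n - 1 on n vertices.  For the
   path P_(n+2), the i x i minor on rows 0..i-1 and columns 1..i is triangular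
   with diagonal -1, so I_i = <1> for i <= n+1 and gamma(P_(n+2)) = n+1, while
   deleting a vertex leaves n+1 vertices and hence gamma <= n. *)

Set Implicit Arguments.
Unset Strict Implicit.
Unset Printing Implicit Defensive.

Import GRing.Theory.
Local Open Scope ring_scope.

Lemma det_eq0_row_sums0 (R : comPzRingType) k (A : 'M[R]_k.+1) :
  (forall i, \sum_j A i j = 0) -> \det A = 0.
Proof.
move=> sumA0.
have A1_0 : A *m const_mx 1 = 0 :> 'cV_k.+1.
  apply/matrixP => i j; rewrite !mxE -[RHS](sumA0 i).
  by apply: eq_bigr => s _; rewrite mxE mulr1.
have := congr1 (mulmx (\adj A)) A1_0.
rewrite mulmxA mul_adj_mx mulmx0 mul_scalar_mx => /matrixP/(_ ord0 ord0).
by rewrite !mxE mulr1.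
Qed.

Section DegreeEvaluation.
Variables (n : nat) (adj : rel 'I_n).

Definition degree_eval (u : 'I_n) : int := (\sum_(w | w != u) (adj u w : nat))%:R.

Lemma laplacian_degree_row_sum0 u :
  \sum_v meval degree_eval (gen_laplacian adj u v) = 0.
Proof.
rewrite (bigD1 u) //= !mxE eqxx mevalXU /degree_eval natr_sum -big_split big1 //.
by move=> w wu; rewrite !mxE eq_sym (negbTE wu) mevalN mevalMn meval1 /= subrr.
Qed.

End DegreeEvaluation.

Lemma full_minor_degree_eval0 k (adj : rel 'I_k.+1) (f g : 'I_k.+1 -> 'I_k.+1) :
  injective g -> meval (degree_eval adj) (\det (mxsub f g (gen_laplacian adj))) = 0.
Proof.
move=> injg; rewrite -det_map_mx; apply: det_eq0_row_sums0 => i.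
rewrite -[RHS](laplacian_degree_row_sum0 adj (f i)) [RHS](reindex_inj injg).
by apply: eq_bigr => j _; rewrite !mxE.
Qed.

Lemma crit_ideal_top_nontrivial k (adj : rel 'I_k.+1) : ~ crit_ideal_trivial adj k.+1.
Proof.
case=> c sum1; have := congr1 (meval (degree_eval adj)) sum1.
rewrite meval1 raddf_sum big1 ?(@oner_eq0 int) // => f _.
rewrite raddf_sum big1 // => g /injectiveP injg.
change (meval (degree_eval adj) (c f g * \det (mxsub f g (gen_laplacian adj))) = 0).
by rewrite mevalM full_minor_degree_eval0 ?mulr0.
Qed.

Lemma crit_ideal_trivial_unit_minor n (adj : rel 'I_n) i (f g : {ffun 'I_i -> 'I_n}) w :
  injectiveb f -> injectiveb g -> w * \det (mxsub f g (gen_laplacian adj)) = 1 ->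
  crit_ideal_trivial adj i.
Proof.
move=> injf injg unit_minor.
exists (fun f' g' => if (f' == f) && (g' == g) then w else 0).
rewrite (bigD1 f injf) /= [X in _ + X]big1 ?addr0; last first.
  by move=> f' /andP[_ /negbTE ->]; rewrite big1 // => g' _; rewrite mul0r.
rewrite (bigD1 g injg) /= [X in _ + X]big1 ?addr0; last first.
  by move=> g' /andP[_ /negbTE ->]; rewrite andbF mul0r.
by rewrite !eqxx.
Qed.

Lemma crit_ideal_trivialP n (adj : rel 'I_n) i :
  reflect (crit_ideal_trivial adj i) (crit_ideal_trivialb adj i).
Proof. by rewrite /crit_ideal_trivialb; case: excluded_middle_informative; constructor. Qed.

Lemma gamma_le k (adj : rel 'I_k.+1) : (gamma adj <= k)%N.
Proof.
apply: leq_trans (subset_leq_card (_ : _ \subset [set~ ord_max])) _.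
  apply/subsetP => i; rewrite !inE.
  apply: contraTneq => ->; apply/crit_ideal_trivialP; exact: crit_ideal_top_nontrivial.
by rewrite cardsC1 card_ord.
Qed.

Section PathMinor.
Variables (n i : nat) (hi : (i <= n.+1)%N).

Definition path_minor_rows : {ffun 'I_i -> 'I_n.+2} :=
  [ffun r => widen_ord (leqW hi) r].
Definition path_minor_cols : {ffun 'I_i -> 'I_n.+2} :=
  [ffun r => lift ord0 (widen_ord hi r)].

Lemma path_minor_trig :
  is_trig_mx (mxsub path_minor_rows path_minor_cols (gen_laplacian (@path_adj n.+2))).
Proof.
apply/is_trig_mxP => r s rs.
rewrite !mxE !ffunE -val_eqE /= /bump /= /path_adj /= !add1n !eqSS.
have -> : (r == s.+1 :> nat) = false by apply/eqP; lia.
have -> : (r == s :> nat) = false by apply/eqP; lia.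
have -> : (s.+2 == r :> nat) = false by apply/eqP; lia.
by rewrite oppr0.
Qed.

Lemma path_minor_det :
  \det (mxsub path_minor_rows path_minor_cols (gen_laplacian (@path_adj n.+2))) = (-1) ^+ i.
Proof.
rewrite (det_trig path_minor_trig) -[i in RHS]card_ord -prodr_const.
apply: eq_bigr => r _; rewrite !mxE !ffunE -val_eqE /= /bump /= add1n.
by rewrite (ltn_eqF (ltnSn r)) /path_adj /= eqxx.
Qed.

Lemma path_crit_ideal_trivial : crit_ideal_trivial (@path_adj n.+2) i.
Proof.
apply: (@crit_ideal_trivial_unit_minor _ _ _ path_minor_rows path_minor_cols ((-1) ^+ i)).
- by apply/injectiveP => r s; rewrite !ffunE => /(congr1 val)/= /val_inj.
- by apply/injectiveP => r s; rewrite !ffunE => /lift_inj/(congr1 val)/= /val_inj.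
- by rewrite path_minor_det -exprMn mulrNN mulr1 expr1n.
Qed.

End PathMinor.

Lemma gamma_path n : gamma (@path_adj n.+2) = n.+1.
Proof.
rewrite /gamma (_ : [set _ | _] = [set~ ord_max]) ?cardsC1 ?card_ord //.
apply/setP => i; rewrite !inE; apply/crit_ideal_trivialP/idP => [triv | i_ne_max].
  by apply/eqP => i_max; move: triv; rewrite i_max; exact: crit_ideal_top_nontrivial.
apply: path_crit_ideal_trivial.
have : nat_of_ord i <> n.+1 by move=> i_max; move/eqP: i_ne_max; apply; apply/val_inj.
have := ltn_ord i; lia.
Qed.

Lemma path_adj_sym m : ssrbool.symmetric (@path_adj m).
Proof. by move=> i j; rewrite /path_adj orbC. Qed.

Lemma path_simple m : simple_graph (@path_adj m).
Proof.
split; last exact: path_adj_sym.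
by move=> i; rewrite /path_adj; apply/negbTE/norP; split; apply/eqP; lia.
Qed.

Lemma path_connected m : connected_graph (@path_adj m).
Proof.
have sym : connect_sym (@path_adj m) by apply/sym_connect_sym/path_adj_sym.
suff connect_up d (i j : 'I_m) : (j : nat) = (i + d)%N -> connect (@path_adj m) i j.
  move=> u v; case: (leqP u v) => uv; first by apply: (connect_up (v - u)%N); lia.
  by rewrite sym; apply: (connect_up (u - v)%N); lia.
elim: d j => [|d IH] j ji.
  by rewrite (_ : j = i) ?connect0 //; apply/val_inj; rewrite /= ji addn0.
have lt_id : (i + d < m)%N by have := ltn_ord j; lia.
apply: connect_trans (IH (Ordinal lt_id) erefl) (connect1 _).
by rewrite /path_adj /= ji addnS eqxx.
Qed.

Theorem theorem5p1 (n : nat) : in_Forb n (@path_adj n.+2).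
Proof.
split.
- exact: path_simple.
- exact: path_connected.
- exact: gamma_path.
- by move=> v; rewrite gamma_path ltnS gamma_le.
Qed.
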